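(* Let $S$ be a $\Gamma$-hemiring, let $\mu$ be a fuzzy h-ideal of $S$ and let $x\in S$. Then: (i) $\mu\subseteq\langle x,\mu\rangle$; (ii) for every $\gamma\in\Gamma$ and every positive integer $n$, $\langle (x\gamma)^{n-1}x,\mu\rangle\subseteq\langle (x\gamma)^{n}x,\mu\rangle$; (iii) if $\mu(x)>0$, then $\operatorname{supp}\langle x,\mu\rangle=S$.
   Context: A $\Gamma$-hemiring is a pair of additive commutative semigroups with zero $S$ and $\Gamma$ with a map $S\times\Gamma\times S\to S$, $(a,\alpha,b)\mapsto a\alpha b$, such that for all $a,b,c\in S$, $\alpha,\beta\in\Gamma$: $(a+b)\alpha c=a\alpha c+b\alpha c$; $a\alpha(b+c)=a\alpha b+a\alpha c$; $a(\alpha+\beta)b=a\alpha b+a\beta b$; $a\alpha(b\beta c)=(a\alpha b)\beta c$; $0\alpha a=0=a\alpha0$; $a0b=0=b0a$. A fuzzy subset is a map $S\to[0,1]$; for fuzzy subsets, $\mu\subseteq\nu$ means $\mu(y)\le\nu(y)$ for all $y$, and $\operatorname{supp}\mu=\{s\in S:\mu(s)>0\}$. A fuzzy h-ideal of $S$ is a fuzzy subset $\mu$, not identically $0$, such that for all $x,y,a,b,z\in S$, $\gamma\in\Gamma$: $\mu(x+y)\ge\min\{\mu(x),\mu(y)\}$; $\mu(x\gamma y)\ge\max\{\mu(x),\mu(y)\}$ (i.e. both $\ge\mu(x)$ and $\ge\mu(y)$); and $x+a+z=b+z$ implies $\mu(x)\ge\min\{\mu(a),\mu(b)\}$. The extension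 of $\mu$ by $x$ is $\langle x,\mu\rangle(y)=\inf_{s\in S,\ \alpha,\gamma\in\Gamma}\mu(x\alpha s\gamma y)$. Here $(x\gamma)^0x=x$ and $(x\gamma)^{n}x=x\gamma x\gamma\cdots\gamma x$ with $n+1$ factors $x$. *)

From mathcomp Require Import all_boot all_order all_algebra.
From mathcomp Require Import all_classical all_reals.
From mathcomp Require Import Rstruct.
From Stdlib Require Import Reals.
Set Implicit Arguments. Unset Strict Implicit. Unset Printing Implicit Defensive.
Import Order.TTheory GRing.Theory Num.Theory.
Local Open Scope classical_set_scope.
Local Open Scope ring_scope.

Record GammaHemiring := {
  Sc : Type;
  Gc : Type;
  addS : Sc -> Sc -> Sc;
  zeroS : Sc;
  addG : Gc -> Gc -> Gc;
  zeroG : Gc;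
  gop : Sc -> Gc -> Sc -> Sc;
  addSA : forall a b c, addS a (addS b c) = addS (addS a b) c;
  addSC : forall a b, addS a b = addS b a;
  add0S : forall a, addS zeroS a = a;
  addGA : forall a b c, addG a (addG b c) = addG (addG a b) c;
  addGC : forall a b, addG a b = addG b a;
  add0G : forall a, addG zeroG a = a;
  gopDl : forall a b c al, gop (addS a b) al c = addS (gop a al c) (gop b al c);
  gopDr : forall a b c al, gop a al (addS b c) = addS (gop a al b) (gop a al c);
  gopDm : forall a b al be, gop a (addG al be) b = addS (gop a al b) (gop a be b);
  gopA : forall a b c al be, gop a al (gop b be c) = gop (gop a al b) be c;
  gop0l : forall a al, gop zeroS al a = zeroS;
  gop0r : forall a al, gop a al zeroS = zeroS;
  gop0m : forall a b, gop a zeroG b = zeroS /\ gop b zeroG a = zeroS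
}.

Definition fuzzy_subset (H : GammaHemiring) (mu : Sc H -> R) : Prop :=
  forall s, (0 <= mu s <= 1)%R.

Definition fsubset (H : GammaHemiring) (mu nu : Sc H -> R) : Prop :=
  forall y, (mu y <= nu y)%R.

Definition supp (H : GammaHemiring) (mu : Sc H -> R) : set (Sc H) :=
  [set s | (0 < mu s)%R].

Definition fuzzy_h_ideal (H : GammaHemiring) (mu : Sc H -> R) : Prop :=
  [/\ fuzzy_subset mu,
      (exists s, mu s <> 0%R),
      (forall x y, (Num.min (mu x) (mu y) <= mu (addS x y))%R),
      (forall x y g, (mu x <= mu (gop x g y))%R /\ (mu y <= mu (gop x g y))%R) &
      (forall x a b z, addS (addS x a) z = addS b z ->
                       (Num.min (mu a) (mu b) <= mu x)%R)].

Definition ext (H : GammaHemiring) (x : Sc H) (mu : Sc H -> R) : Sc H -> R :=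
  fun y => inf [set r : R | exists s al ga, r = mu (gop (gop x al s) ga y)].

(* (x g)^n x = x g x g ... g x with n+1 factors x. *)
Fixpoint gpow (H : GammaHemiring) (x : Sc H) (g : Gc H) (n : nat) : Sc H :=
  match n with
  | O => x
  | S m => gop x g (gpow x g m)
  end.

From mathcomp Require Import all_boot all_order all_algebra.
From mathcomp Require Import all_classical all_reals.
From mathcomp Require Import Rstruct.
From Stdlib Require Import Reals.
Set Implicit Arguments. Unset Strict Implicit. Unset Printing Implicit Defensive.
Import Order.TTheory GRing.Theory Num.Theory.
Local Open Scope classical_set_scope.
Local Open Scope ring_scope.

(* The infimum defining <x,mu>(y) ranges over values mu(x al s ga y),
   and an h-ideal can only grow under Gamma-multiplication on either side.  Hence
   mu(y) and mu(x) are lower bounds of these values, giving (i) and (iii), and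
   by associativity (x ga b) al s ga' y = x ga ((b al s) ga' y), so every value
   used for <x ga b, mu>(y) dominates one used for <b, mu>(y), giving (ii). *)

Section Extension.

Variables (H : GammaHemiring) (mu : Sc H -> R).

Lemma ext_ge (x y : Sc H) (c : R) :
  (forall s al ga, (c <= mu (gop (gop x al s) ga y))%R) -> (c <= ext x mu y)%R.
Proof.
move=> hc; apply/RleP/lb_le_inf.
  by exists (mu (gop (gop x (zeroG H) (zeroS H)) (zeroG H) y)); do 3 eexists.
by move=> r [s [al [ga ->]]]; exact/RleP.
Qed.

Lemma mu_le_ext (x y : Sc H) :
  (forall a g b, (mu a <= mu (gop a g b))%R) -> (mu x <= ext x mu y)%R.
Proof.
move=> mu_gopl; apply: ext_ge => s al ga.
exact: Rle_trans (mu_gopl _ _ _) (mu_gopl _ _ _).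
Qed.

Hypothesis mu_ge0 : forall s, (0 <= mu s)%R.

Lemma ext_le (x y s : Sc H) (al ga : Gc H) :
  (ext x mu y <= mu (gop (gop x al s) ga y))%R.
Proof.
apply/RleP/ge_inf; last by do 3 eexists.
by exists 0 => r [s1 [al1 [ga1 ->]]]; exact/RleP.
Qed.

Hypothesis mu_gopr : forall x g y, (mu y <= mu (gop x g y))%R.

Lemma fsubset_ext (x : Sc H) : fsubset mu (ext x mu).
Proof. by move=> y; apply: ext_ge => s al ga; exact: mu_gopr. Qed.

Lemma fsubset_ext_gop (x b : Sc H) (g : Gc H) :
  fsubset (ext b mu) (ext (gop x g b) mu).
Proof.
move=> y; apply: ext_ge => s al ga; rewrite -!gopA.
apply: Rle_trans (mu_gopr _ _ _); rewrite gopA; exact: ext_le.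
Qed.

End Extension.

Theorem proposition3p7 (H : GammaHemiring) (mu : Sc H -> R) (x : Sc H) :
  fuzzy_h_ideal mu ->
  [/\ fsubset mu (ext x mu),
      (forall (g : Gc H) (n : nat), leq 1 n ->
         fsubset (ext (gpow x g n.-1) mu) (ext (gpow x g n) mu)) &
      ((0 < mu x)%R -> supp (ext x mu) = [set: Sc H])].
Proof.
case=> fs _ _ mu_gop _.
have mu_ge0 s : (0 <= mu s)%R by case: (fs s).
have mu_gopl a g b : (mu a <= mu (gop a g b))%R by case: (mu_gop a b g).
have mu_gopr a g b : (mu b <= mu (gop a g b))%R by case: (mu_gop a b g).
split.
- exact: fsubset_ext mu_gopr x.
- by move=> g [|n] //= _; apply: fsubset_ext_gop.
- move=> mux; apply/seteqP; split=> // y _; rewrite /supp /=.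
  exact: Rlt_le_trans _ _ _ mux (mu_le_ext x y mu_gopl).
Qed.
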